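(* Let $n\ge3$, $\mathfrak{g}=o(2n)$ in split form, and let $r_{BD}$ be the Belavin–Drinfeld $r$-matrix associated to the admissible triple $\Gamma_1=\{\alpha_{n-1}\}$, $\Gamma_2=\{\alpha_n\}$, $\tau(\alpha_{n-1})=\alpha_n$ (with some admissible $r_0$). Then $C(r_{BD})$ consists exactly of the diagonal matrices $T=\mathrm{diag}(t_1,\dots,t_{n-1},\eta,\eta,t_{n-1}^{-1},\dots,t_1^{-1})$ with $t_1,\dots,t_{n-1}\in\overline{\mathbb{K}}^\times$ arbitrary and $\eta\in\{1,-1\}$.
   Context: $\mathbb{K}=\mathbb{C}((\hbar))$, $\overline{\mathbb{K}}$ its algebraic closure. $S$ is the $2n\times2n$ antidiagonal matrix of ones; $o(2n)=\{A:A^TS+SA=0\}$, $O(2n)=\{X:X^TSX=S\}$ acting by conjugation. The Cartan subalgebra consists of $\mathrm{diag}(a_1,\dots,a_n,-a_n,\dots,-a_1)$; $\epsilon_i$ is the functional giving $a_i$; simple roots $\alpha_i=\epsilon_i-\epsilon_{i+1}$ ($i<n$), $\alpha_n=\epsilon_{n-1}+\epsilon_n$; positive roots correspond to the upper triangular part. $e_{\pm\alpha}$ are root vectors normalized by the invariant form, $\Omega$ the Casimir element, $\Omega_0$ its Cartan part. The $r$-matrix is $r_{BD}=r_0+\sum_{\alpha>0}e_\alpha\otimes e_{-\alpha}+e_{\alpha_{n-1}}\wedge e_{-\alpha_n}$ with $r_0\in\mathfrak{h}(\overline{\mathbb{K}})^{\otimes2}$, $r_0+r_0^{21}=\Omega_0$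 and $(\alpha_n\otimes1+1\otimes\alpha_{n-1})(r_0)=0$; $a\wedge b=a\otimes b-b\otimes a$. $C(r)=\{X\in O(2n,\overline{\mathbb{K}}):(\mathrm{Ad}_X\otimes\mathrm{Ad}_X)(r)=r\}$. *)

From HB Require Import structures.
From mathcomp Require Import all_boot all_order all_algebra.
Set Implicit Arguments. Unset Strict Implicit. Unset Printing Implicit Defensive.
Import Order.TTheory GRing.Theory.
Local Open Scope ring_scope.

(* Base field: an algebraically closed field of characteristic 0, playing the
   role of \overline{K}, K = C((hbar)).  Indices are 0-based: the matrix size is
   N = 2n, indices 0..2n-1, and the "mirror" of an index k is k' = 2n-1-k. *)

Section SoDefs.
Variable F : fieldType.
Variable n : nat.
Local Notation N := (2 * n)%N.

Definition mir (k : nat) : nat := (N.-1 - k)%N.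

Definition Smx : 'M[F]_N := \matrix_(i, j) (((i : nat) + j)%N == N.-1)%:R.

Definition in_O (X : 'M[F]_N) : Prop := X^T *m Smx *m X = Smx.
Definition in_o (A : 'M[F]_N) : Prop := A^T *m Smx + Smx *m A = 0.

Definition E (a b : nat) : 'M[F]_N :=
  \matrix_(i, j) (((i : nat) == a) && ((j : nat) == b))%:R.

(* Cartan element H_i = diag(0,..,1,..,0,..,-1,..,0) (i-th and mirror entries);
   a general Cartan element diag(a_1..a_n,-a_n..-a_1) is \sum_i a_i H_i.
   The epsilon_j are the dual coordinates: epsilon_j(H_i) = [i == j]. *)
Definition H (i : nat) : 'M[F]_N := E i i - E (mir i) (mir i).

(* Root vectors for positive roots, i<j (0-based):
     e_{eps_i - eps_j} = E_{i,j} - E_{j',i'},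
     e_{eps_i + eps_j} = E_{i,j'} - E_{j,i'},
   and e_{-alpha} = (e_alpha)^T.  They satisfy (e_alpha, e_{-alpha}) = 1 for
   the invariant form (A,B) = tr(AB)/2, for which the H_i are orthonormal. *)
Definition eminus (i j : nat) : 'M[F]_N :=
  E i j - E (mir j) (mir i).
Definition eplus (i j : nat) : 'M[F]_N :=
  E i (mir j) - E j (mir i).

(* Tensors in gl(2n) (x) gl(2n): coefficient of E_{ab} (x) E_{cd} at ((a,b),c),d *)
Definition tensor := {ffun 'I_N * 'I_N * 'I_N * 'I_N -> F}.

Definition tens (A B : 'M[F]_N) : tensor :=
  [ffun p : 'I_N * 'I_N * 'I_N * 'I_N => A p.1.1.1 p.1.1.2 * B p.1.2 p.2].

Definition wedge (A B : 'M[F]_N) : tensor := tens A B - tens B A.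

(* (Ad_X (x) Ad_X)(T), Ad_X(A) = X A X^{-1}, written in coordinates *)
Definition AdAd (X : 'M[F]_N) (T : tensor) : tensor :=
  let Xi := invmx X in
  [ffun p : 'I_N * 'I_N * 'I_N * 'I_N =>
     \sum_(a < N) \sum_(b < N) \sum_(c < N) \sum_(d < N)
       X p.1.1.1 a * Xi b p.1.1.2 * X p.1.2 c * Xi d p.2 * T (a, b, c, d)].

Definition r0_of (c : 'M[F]_n) : tensor :=
  \sum_(i < n) \sum_(j < n) tens (c i j *: H i) (H j).

(* Omega_0 = \sum_i H_i (x) H_i (H_i orthonormal for the invariant form) *)
Definition Omega0 : tensor := \sum_(i < n) tens (H i) (H i).

Definition flip (T : tensor) : tensor :=
  [ffun p : 'I_N * 'I_N * 'I_N * 'I_N => T (p.1.2, p.2, p.1.1.1, p.1.1.2)].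

(* Roots as linear functionals on h, given by their coefficients on the
   epsilon_i: alpha(H_i) = alpha_coef i. *)
Definition contr_left (f : 'I_n -> F) (c : 'M[F]_n) : 'M[F]_N :=
  \sum_(i < n) \sum_(j < n) (c i j * f i) *: H j.
Definition contr_right (g : 'I_n -> F) (c : 'M[F]_n) : 'M[F]_N :=
  \sum_(i < n) \sum_(j < n) (c i j * g j) *: H i.

(* simple roots alpha_{n-1} = eps_{n-1} - eps_n, alpha_n = eps_{n-1} + eps_n
   (1-based in the paper; indices n-2, n-1 here, 0-based) *)
Definition alpha_nm1 (i : 'I_n) : F :=
  ((i : nat) == n.-2)%:R - ((i : nat) == n.-1)%:R.
Definition alpha_n (i : 'I_n) : F :=
  ((i : nat) == n.-2)%:R + ((i : nat) == n.-1)%:R.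

Definition admissible_r0 (c : 'M[F]_n) : Prop :=
  r0_of c + flip (r0_of c) = Omega0 /\
  contr_left alpha_n c + contr_right alpha_nm1 c = 0.

Definition e_alpha_nm1 : 'M[F]_N := eminus n.-2 n.-1.
Definition e_malpha_n : 'M[F]_N := (eplus n.-2 n.-1)^T.

Definition r_BD (c : 'M[F]_n) : tensor :=
  r0_of c
  + \sum_(i < n) \sum_(j < n | (i < j)%N)
       (tens (eminus i j) (eminus i j)^T + tens (eplus i j) (eplus i j)^T)
  + wedge e_alpha_nm1 e_malpha_n.

Definition in_C (r : tensor) (X : 'M[F]_N) : Prop := in_O X /\ AdAd X r = r.

Definition Tdiag (t : nat -> F) (eta : F) : 'M[F]_N :=
  diag_mx (\row_(k < N)
    if (k < n.-1)%N then t k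
    else if (k <= n)%N then eta
    else (t (N.-1 - k)%N)^-1).

End SoDefs.

From HB Require Import structures.
From mathcomp Require Import all_boot all_order all_algebra.
From mathcomp Require Import ring zify.
Set Implicit Arguments. Unset Strict Implicit. Unset Printing Implicit Defensive.
Import Order.TTheory GRing.Theory.
Local Open Scope ring_scope.

(* Two matrix-valued contractions of tensors are used:
   - mcomm T = m(T) - m(T^21), with m(A (x) B) = AB.  For r it equals 2 rho^vee
     (r_0 and the wedge term drop out), a diagonal matrix whose entries are
     pairwise distinct in characteristic 0 except the two middle ones (n-1, n);
   - Phi_M T, with Phi_M(A (x) B) = A M B, for M = E_{n-2,n-2}.  On the middle
     2x2 block, Phi_M r = -E_{n,n-1}, coming from e_{alpha_{n-1}} /\ e_{-alpha_n}.
   Both intertwine Ad_X (x) Ad_X with conjugation by X (when X commutes with M),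
   so for X in C(r) they commute with X.  Commuting with 2 rho^vee makes X
   diagonal outside the middle block; then X commutes with E_{n-2,n-2}, and
   commuting with Phi_M r makes the block lower triangular with equal diagonal
   entries; finally X^T S X = S gives X_{kk} X_{k'k'} = 1, kills the last
   off-diagonal entry and forces eta^2 = 1.
   Backward direction.  Conjugation by D = diag(x) multiplies E_{ab} by x_a/x_b;
   every summand of r is a tensor of two vectors of mutually inverse weights
   (for the wedge term because x_{n-1} = eta = eta^-1), so D fixes r, and D is
   orthogonal because x_{k'} = x_k^-1. *)

Section Contraction.
Variables (F : fieldType) (n : nat).
Local Notation N := (2 * n)%N.
Local Notation tensor := (tensor F n).

Definition Phi (M : 'M[F]_N) (T : tensor) : 'M[F]_N :=
  \matrix_(p, q) \sum_(b < N) \sum_(c < N) T (p, b, c, q) * M b c.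

Lemma Phi_is_zmod_morphism M : zmod_morphism (Phi M).
Proof.
move=> T1 T2; apply/matrixP => p q; rewrite !mxE -sumrB.
by apply: eq_bigr => b _; rewrite -sumrB; apply: eq_bigr => c _; rewrite !ffunE mulrBl.
Qed.
HB.instance Definition _ M :=
  GRing.isZmodMorphism.Build tensor 'M[F]_N (Phi M) (Phi_is_zmod_morphism M).

Lemma Phi_tens M (A B : 'M[F]_N) : Phi M (tens A B) = A *m M *m B.
Proof.
apply/matrixP => p q; rewrite !mxE exchange_big /=; apply: eq_bigr => c _.
rewrite !mxE mulr_suml; apply: eq_bigr => b _; rewrite ffunE /=; ring.
Qed.

Lemma flip_is_zmod_morphism : zmod_morphism (@flip F n).
Proof. by move=> T1 T2; apply/ffunP => x; rewrite !ffunE. Qed.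
HB.instance Definition _ :=
  GRing.isZmodMorphism.Build tensor tensor (@flip F n) flip_is_zmod_morphism.

Lemma flip_tens (A B : 'M[F]_N) : flip (tens A B) = tens B A.
Proof. by apply/ffunP => x; rewrite !ffunE /= mulrC. Qed.

Lemma sum_rot3 (I J K : finType) (G : I -> J -> K -> F) :
  \sum_i \sum_j \sum_k G i j k = \sum_k \sum_i \sum_j G i j k.
Proof. under eq_bigr do rewrite exchange_big. by rewrite exchange_big. Qed.

Lemma flip_AdAd (X : 'M[F]_N) (T : tensor) : AdAd X (flip T) = flip (AdAd X T).
Proof.
apply/ffunP => [[[[p q] u] v]]; rewrite !ffunE /=.
under eq_bigr => a _ do under eq_bigr => b _ do under eq_bigr => c _ do
  under eq_bigr => d _ do rewrite ffunE /=.
rewrite sum_rot3; apply: eq_bigr => c _.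
rewrite sum_rot3; apply: eq_bigr => d _; apply: eq_bigr => a _; apply: eq_bigr => b _.
ring.
Qed.

Lemma Phi_AdAd (X M : 'M[F]_N) (T : tensor) :
  Phi M (AdAd X T) = X *m Phi (invmx X *m M *m X) T *m invmx X.
Proof.
apply/matrixP => p q; rewrite !mxE /AdAd.
set Xi := invmx X.
transitivity (\sum_(a < N) \sum_(b' < N) \sum_(c' < N) \sum_(d < N)
   \sum_(b < N) \sum_(c < N)
   X p a * Xi b' b * X c c' * Xi d q * T (a, b', c', d) * M b c).
  under eq_bigr => b _ do under eq_bigr => c _ do rewrite ffunE /=.
  under eq_bigr => b _ do under eq_bigr => c _ do
    (rewrite mulr_suml; under eq_bigr => a _ do
      (rewrite mulr_suml; under eq_bigr => b' _ do
        (rewrite mulr_suml; under eq_bigr => c' _ do rewrite mulr_suml))).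
  rewrite sum_rot3; apply: eq_bigr => a _.
  rewrite sum_rot3; apply: eq_bigr => b' _.
  rewrite sum_rot3; apply: eq_bigr => c' _.
  by rewrite sum_rot3; apply: eq_bigr => d _.
symmetry.
under eq_bigr => d _ do rewrite !mxE mulr_suml.
rewrite exchange_big /=; apply: eq_bigr => a _.
under eq_bigr => d _ do (rewrite mxE mulr_sumr mulr_suml; under eq_bigr => b' _ do
   (rewrite mulr_sumr mulr_suml; under eq_bigr => c' _ do
      (rewrite !mxE mulr_sumr mulr_sumr mulr_suml; under eq_bigr => c _ do
        (rewrite !mxE mulr_suml mulr_sumr mulr_sumr mulr_suml)))).
rewrite -sum_rot3; apply: eq_bigr => b' _; apply: eq_bigr => c' _; apply: eq_bigr => d _.
rewrite exchange_big /=; apply: eq_bigr => b _; apply: eq_bigr => c _.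
ring.
Qed.

Lemma Phi_commute (X M : 'M[F]_N) (T : tensor) : X \in unitmx -> AdAd X T = T ->
  M *m X = X *m M -> Phi M T *m X = X *m Phi M T.
Proof.
move=> hu hT hMX.
have hM : invmx X *m M *m X = M by rewrite -mulmxA hMX mulmxA mulVmx // mul1mx.
by rewrite -{1}hT Phi_AdAd hM -!mulmxA mulVmx // mulmx1.
Qed.

Definition mcomm (T : tensor) : 'M[F]_N := Phi 1%:M T - Phi 1%:M (flip T).

Lemma mcomm_is_zmod_morphism : zmod_morphism mcomm.
Proof. move=> T1 T2; rewrite /mcomm !raddfB; apply/matrixP => i j; rewrite !mxE; ring. Qed.
HB.instance Definition _ :=
  GRing.isZmodMorphism.Build tensor 'M[F]_N mcomm mcomm_is_zmod_morphism.

Lemma mcomm_tens (A B : 'M[F]_N) : mcomm (tens A B) = A *m B - B *m A.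
Proof. by rewrite /mcomm flip_tens !Phi_tens !mulmx1. Qed.

Lemma mcomm_commute (X : 'M[F]_N) (T : tensor) : X \in unitmx -> AdAd X T = T ->
  mcomm T *m X = X *m mcomm T.
Proof.
move=> hu hT; have h1 : 1%:M *m X = X *m 1%:M by rewrite mul1mx mulmx1.
have hT' : AdAd X (flip T) = flip T by rewrite flip_AdAd hT.
by rewrite /mcomm mulmxBl mulmxBr !Phi_commute.
Qed.

End Contraction.

Section DiagonalCommutant.
Variables (R : idomainType) (m : nat).

Lemma commute_diag_entry (d : 'rV[R]_m) (X : 'M[R]_m) p q :
  diag_mx d *m X = X *m diag_mx d -> d 0 p != d 0 q -> X p q = 0.
Proof.
move=> hXd hd; have := congr1 (fun M : 'M[R]_m => M p q) hXd.
rewrite mul_diag_mx mul_mx_diag !mxE => e.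
apply/eqP; move: hd; apply: contraNT => hX.
by rewrite -(inj_eq (mulIf hX)) /= e mulrC.
Qed.

Lemma diag_commute (g : 'rV[R]_m) (X : 'M[R]_m) :
  (forall p q, X p q != 0 -> g 0 p = g 0 q) -> diag_mx g *m X = X *m diag_mx g.
Proof.
move=> hg; apply/matrixP => p q; rewrite mul_diag_mx mul_mx_diag !mxE.
by have [->|/hg->] := eqVneq (X p q) 0; rewrite ?mulr0 ?mul0r // mulrC.
Qed.

End DiagonalCommutant.

Section Orthogonal.
Variables (F : fieldType) (n : nat).
Local Notation N := (2 * n)%N.
Local Notation S := (Smx F n).

Lemma Smx_rev (p q : 'I_N) : S p q = (q == rev_ord p)%:R.
Proof.
rewrite mxE -val_eqE /=; congr (_%:R); apply/eqP/eqP; have := ltn_ord p; lia.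
Qed.

Lemma mulSmx (A : 'M[F]_N) p q : (S *m A) p q = A (rev_ord p) q.
Proof.
rewrite mxE (bigD1 (rev_ord p)) //= big1 => [|j hj]; last by rewrite Smx_rev (negbTE hj) mul0r.
by rewrite Smx_rev eqxx mul1r addr0.
Qed.

Lemma mulmxS (A : 'M[F]_N) p q : (A *m S) p q = A p (rev_ord q).
Proof.
rewrite mxE (bigD1 (rev_ord q)) //= big1 => [|j hj].
  by rewrite Smx_rev rev_ordK eqxx mulr1 addr0.
by rewrite Smx_rev eq_sym (can2_eq rev_ordK rev_ordK) (negbTE hj) mulr0.
Qed.

Lemma Smx_sqr : S *m S = 1%:M.
Proof.
by apply/matrixP => p q; rewrite mulSmx Smx_rev !mxE rev_ordK eq_sym.
Qed.

Lemma O_unit (X : 'M[F]_N) : in_O X -> X \in unitmx.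
Proof.
move=> hX; have h : (S *m X^T *m S) *m X = 1%:M.
  by rewrite -!mulmxA (mulmxA X^T) hX Smx_sqr.
by case: (mulmx1_unit h).
Qed.

Lemma O_entry (X : 'M[F]_N) p q : in_O X ->
  \sum_j X (rev_ord j) p * X j q = S p q.
Proof.
by move=> <-; rewrite mxE; apply: eq_bigr => j _; rewrite mulmxS mxE.
Qed.

End Orthogonal.

Section RootVectors.
Variables (F : fieldType) (n : nat).
Local Notation N := (2 * n)%N.
Local Notation E := (E F n).
Local Notation H := (H F n).
Local Notation mir := (mir n).

Lemma trE a b : (E a b)^T = E b a.
Proof. by apply/matrixP => p q; rewrite !mxE andbC. Qed.

Lemma trmxB (A B : 'M[F]_N) : (A - B)^T = A^T - B^T.
Proof. exact: raddfB. Qed.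

Lemma EE a b c d : E a b *m E c d = ((b == c) && (b < N)%N)%:R *: E a d.
Proof.
apply/matrixP => p q; rewrite !mxE.
have [hb|hb] := ltnP b N.
  rewrite (bigD1 (Ordinal hb)) //= big1 => [|k hk]; last first.
    rewrite !mxE; have -> : ((k : nat) == b) = false.
      by apply/negbTE; apply: contra hk => /eqP h; apply/eqP/val_inj.
    by rewrite andbF mul0r.
  rewrite !mxE eqxx !andbT addr0.
  by case: (p == a :> nat); case: (b == c); case: (q == d :> nat);
    rewrite /= ?mul1r ?mulr1 ?mul0r ?mulr0.
rewrite andbF mul0r big1 // => k _; rewrite !mxE.
have -> : ((k : nat) == b) = false by apply/negbTE/eqP => h; move: (ltn_ord k); lia.
by rewrite andbF mul0r.
Qed.

Lemma E_diag k : E k k = diag_mx (\row_(p < N) ((p : nat) == k)%:R).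
Proof.
apply/matrixP => p q; rewrite !mxE.
have [<-|hpq] := eqVneq p q; first by rewrite andbb mulr1n.
rewrite mulr0n; case: eqP => // hp; case: eqP => // hq.
by case/eqP: hpq; apply: val_inj; rewrite /= hp hq.
Qed.

Lemma H_diag i :
  H i = diag_mx (\row_(p < N) (((p : nat) == i)%:R - ((p : nat) == mir i)%:R)).
Proof.
by rewrite /H !E_diag -linearB; congr diag_mx; apply/rowP => p; rewrite !mxE.
Qed.

Lemma H_comm i j : H i *m H j = H j *m H i.
Proof. by rewrite !H_diag diag_mxC. Qed.

Lemma mul_E_mid (A B : 'M[F]_N) (k p q : 'I_N) :
  (A *m E k k *m B) p q = A p k * B k q.
Proof.
rewrite E_diag mul_mx_diag mxE (bigD1 k) //= big1 ?addr0 => [|j hj].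
  by rewrite !mxE eqxx mulr1.
by rewrite !mxE (inj_eq val_inj) (negbTE hj) mulr0 mul0r.
Qed.

(* [e_alpha, e_{-alpha}] for the positive roots eps_i - eps_j and eps_i + eps_j
   sum up to 2 H_i (the H_j-components cancel between the two roots). *)
Lemma comm_pos_roots i j : (i < j)%N -> (j < n)%N ->
  eminus F n i j *m (eminus F n i j)^T - (eminus F n i j)^T *m eminus F n i j
  + (eplus F n i j *m (eplus F n i j)^T - (eplus F n i j)^T *m eplus F n i j)
  = 2%:R *: H i.
Proof.
move=> hij hjn.
have h1 : (j < mir j)%N by rewrite /mir; lia.
have h2 : (mir j < mir i)%N by rewrite /mir; lia.
have h3 : (i < mir j)%N by rewrite /mir; lia.
have h4 : (i < mir i)%N by rewrite /mir; lia.
have h5 : (j < mir i)%N by rewrite /mir; lia.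
have hiN : (i < N)%N by lia.
have hjN : (j < N)%N by lia.
have hiN' : (mir i < N)%N by rewrite /mir; lia.
have hjN' : (mir j < N)%N by rewrite /mir; lia.
rewrite /eminus /eplus /H !trmxB !trE !mulmxBl !mulmxBr !EE !eqxx.
rewrite ?(ltn_eqF hij) ?(gtn_eqF hij) ?(ltn_eqF h1) ?(gtn_eqF h1) ?(ltn_eqF h2).
rewrite ?(gtn_eqF h2) ?(ltn_eqF h3) ?(gtn_eqF h3) ?(ltn_eqF h4) ?(gtn_eqF h4).
rewrite ?(ltn_eqF h5) ?(gtn_eqF h5) hiN hjN hiN' hjN' /= !scale1r !scale0r.
by apply/matrixP => p q; rewrite !mxE; ring.
Qed.

(* [e_{alpha_{n-1}}, e_{-alpha_n}] = 0, since alpha_{n-1} - alpha_n is not a root *)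
Lemma comm_wedge : (3 <= n)%N ->
  e_alpha_nm1 F n *m e_malpha_n F n - e_malpha_n F n *m e_alpha_nm1 F n = 0.
Proof.
move=> hn.
have h1 : (n.-2 < n.-1)%N by lia.
have h2 : (n.-1 < mir n.-1)%N by rewrite /mir; lia.
have h3 : (mir n.-1 < mir n.-2)%N by rewrite /mir; lia.
have h4 : (n.-2 < mir n.-1)%N by rewrite /mir; lia.
have h5 : (n.-2 < mir n.-2)%N by rewrite /mir; lia.
have h6 : (n.-1 < mir n.-2)%N by rewrite /mir; lia.
have hiN : (n.-2 < N)%N by lia.
have hjN : (n.-1 < N)%N by lia.
have hiN' : (mir n.-2 < N)%N by rewrite /mir; lia.
have hjN' : (mir n.-1 < N)%N by rewrite /mir; lia.
rewrite /e_alpha_nm1 /e_malpha_n /eminus /eplus !trmxB !trE !mulmxBl !mulmxBr !EE.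
rewrite ?eqxx ?(ltn_eqF h1) ?(gtn_eqF h1) ?(ltn_eqF h2) ?(gtn_eqF h2) ?(ltn_eqF h3).
rewrite ?(gtn_eqF h3) ?(ltn_eqF h4) ?(gtn_eqF h4) ?(ltn_eqF h5) ?(gtn_eqF h5).
rewrite ?(ltn_eqF h6) ?(gtn_eqF h6) ?hiN ?hjN ?hiN' ?hjN' /= ?scale1r ?scale0r.
by apply/matrixP => p q; rewrite !mxE; ring.
Qed.

(* rho = \sum_i (n-1-i) eps_i (0-based), the half sum of the positive roots;
   the diagonal matrix 2 rho^vee has entry two_rho k at position k. *)
Definition rho_coord (k : nat) : F := (n - k.+1)%:R.
Definition two_rho (k : nat) : F := 2%:R * (rho_coord k - rho_coord (mir k)).

(* rho_coord vanishes beyond n, so this holds for every k *)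
Lemma sum_rho_delta (k : nat) :
  \sum_(i < n) rho_coord i * ((k == i :> nat))%:R = rho_coord k.
Proof.
have [hk|hk] := ltnP k n.
  rewrite (bigD1 (Ordinal hk)) //= eqxx mulr1 big1 ?addr0 // => i hi.
  by rewrite (_ : (k == i) = false) ?mulr0 //; apply/negbTE; apply: contra hi => /eqP h;
    apply/eqP/val_inj.
rewrite /rho_coord (_ : (n - k.+1 = 0)%N); last by lia.
rewrite big1 // => i _; rewrite (_ : (k == i) = false) ?mulr0 //.
by apply/eqP; move: (ltn_ord i); lia.
Qed.

(* \sum_i a_i H_i is diagonal with entry a_p - a_{p'} at p; here a = 2 rho_coord *)
Lemma two_rho_diag :
  \sum_(i < n) (2%:R * rho_coord i) *: H i = diag_mx (\row_(p < N) two_rho p).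
Proof.
under eq_bigr do rewrite H_diag -linearZ.
rewrite -linear_sum; congr diag_mx; apply/rowP => p; rewrite summxE.
under eq_bigr do rewrite !mxE mulrBr -!mulrA.
rewrite sumrB -!mulr_sumr mxE /two_rho mulrBr; congr (_ * _ - _ * _); first exact: sum_rho_delta.
rewrite -sum_rho_delta; apply: eq_bigr => i _; congr (_ * _%:R).
by apply/eqP/eqP; move: (ltn_ord i) (ltn_ord p); rewrite /mir; lia.
Qed.

(* The commutator contraction of r_BD is 2 rho^vee: r_0 and the wedge term
   contribute nothing, and each positive root contributes [e_alpha, e_{-alpha}]. *)
Lemma mcomm_rBD (c : 'M[F]_n) : (3 <= n)%N ->
  mcomm (r_BD c) = diag_mx (\row_(p < N) two_rho p).
Proof.
move=> hn; rewrite /r_BD 2!raddfD /=.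
have -> : mcomm (r0_of c) = 0.
  rewrite /r0_of raddf_sum big1 // => i _; rewrite raddf_sum big1 // => j _.
  by rewrite /= mcomm_tens -scalemxAl -scalemxAr H_comm subrr.
have -> : mcomm (wedge (e_alpha_nm1 F n) (e_malpha_n F n)) = 0.
  by rewrite /wedge raddfB /= !mcomm_tens -[X in _ - X]opprB comm_wedge // oppr0 subr0.
rewrite add0r addr0 -two_rho_diag raddf_sum; apply: eq_bigr => i _.
rewrite raddf_sum.
under eq_bigr => j hij do rewrite raddfD /= !mcomm_tens (comm_pos_roots hij (ltn_ord j)).
transitivity (\sum_(i.+1 <= j < n) 2%:R *: H i); first by rewrite big_geq_mkord.
by rewrite sumr_const_nat /rho_coord -scaler_nat scalerA mulrC.
Qed.

End RootVectors.

Section MiddleBlock.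
Variables (F : fieldType) (n : nat).
Local Notation N := (2 * n)%N.
Local Notation E := (E F n).
Local Notation mir := (mir n).

(* the two middle indices n-1, n (0-based), where 2 rho^vee vanishes *)
Definition mid (k : nat) : bool := (k == n.-1) || (k == n).

Lemma natr_inj_char0 : [pchar F] =i pred0 -> injective (fun k : nat => k%:R : F).
Proof.
move=> h0 a b /= e; have hc := (pcharf0P F).1 h0.
wlog hab : a b e / (a <= b)%N => [W|]; first by case: (leqP a b) => h;
  [exact: W | apply/esym/W => //; exact: ltnW].
by move: (hc (b - a)%N); rewrite natrB // e subrr eqxx => /esym/eqP; lia.
Qed.

Lemma two_rho_inj : [pchar F] =i pred0 -> forall p q : 'I_N,
  p != q -> ~~ (mid p && mid q) -> two_rho F n p != two_rho F n q.
Proof.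
move=> h0 p q hpq hb; apply/eqP.
have h2 : (2%:R : F) != 0 by rewrite ((pcharf0P F).1 h0).
rewrite /two_rho /rho_coord => /(mulfI h2) /eqP.
rewrite subr_eq addrAC eq_sym subr_eq -!natrD => /eqP /(natr_inj_char0 h0).
move: hpq hb; rewrite /mid -val_eqE /=; move: (ltn_ord p) (ltn_ord q); rewrite /mir.
by case: eqP => ?; case: eqP => ?; case: eqP => ?; case: eqP => ?; case: eqP => ? //=; lia.
Qed.

Hypothesis hn : (3 <= n)%N.

(* Contracting r_BD through E_{n-2,n-2} and reading the middle 2x2 block:
   only the wedge term survives, giving -E_{n,n-1}. *)
Lemma Phi_mid (c : 'M[F]_n) (p q : 'I_N) : mid p -> mid q ->
  Phi (E n.-2 n.-2) (r_BD c) p q = - (((p : nat) == n) && ((q : nat) == n.-1))%:R.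
Proof.
move=> hp hq; have hk : (n.-2 < N)%N by lia.
have hpb : (n.-1 <= p <= n)%N by case/orP: hp => /eqP ->; lia.
have hqb : (n.-1 <= q <= n)%N by case/orP: hq => /eqP ->; lia.
have addE (A B : 'M[F]_N) : (A + B) p q = A p q + B p q by rewrite mxE.
have oppE (A : 'M[F]_N) : (- A) p q = - A p q by rewrite mxE.
have h0 : Phi (E n.-2 n.-2) (r0_of c) p q = 0.
  rewrite /r0_of raddf_sum summxE big1 // => i _; rewrite /= raddf_sum summxE big1 // => j _.
  rewrite /= Phi_tens (mul_E_mid _ _ (Ordinal hk)) mxE H_diag !mxE.
  rewrite (_ : (p == Ordinal hk) = false) ?mulr0n ?mulr0 ?mul0r //.
  by apply/eqP => /(congr1 val) /=; lia.
have h1 : Phi (E n.-2 n.-2) (\sum_(i < n) \sum_(j < n | (i < j)%N)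
     (tens (eminus F n i j) (eminus F n i j)^T + tens (eplus F n i j) (eplus F n i j)^T)) p q = 0.
  rewrite raddf_sum summxE big1 // => i _; rewrite /= raddf_sum summxE big1 // => j hij.
  rewrite /= raddfD addE /= !Phi_tens !(mul_E_mid _ _ (Ordinal hk)) /eminus /eplus !mxE /=.
  have hi := ltn_ord i; have hj := ltn_ord j.
  have f1 : (n.-2 == mir i) = false by apply/eqP; rewrite /mir; lia.
  have f2 : (n.-2 == mir j) = false by apply/eqP; rewrite /mir; lia.
  have f3 : ((p : nat) == i) && (n.-2 == j) = false.
    by apply/negbTE/andP => [[/eqP ? /eqP ?]]; lia.
  by rewrite f1 f2 f3 !andbF subrr !mul0r addr0.
rewrite /r_BD 2!raddfD /= !addE h0 h1 !add0r /wedge raddfB /= addE oppE !Phi_tens.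
rewrite !(mul_E_mid _ _ (Ordinal hk)) /e_alpha_nm1 /e_malpha_n /eminus /eplus !mxE /=.
have g1 : (n.-2 == n.-1) = false by apply/eqP; lia.
have g2 : (n.-2 == mir n.-1) = false by apply/eqP; rewrite /mir; lia.
have g3 : (n.-2 == mir n.-2) = false by apply/eqP; rewrite /mir; lia.
have g4 : ((p : nat) == mir n.-1) = ((p : nat) == n) by apply/eqP/eqP; rewrite /mir; lia.
have g5 : ((q : nat) == mir n.-2) = false by apply/eqP; rewrite /mir; lia.
rewrite g1 g2 g3 g4 g5 eqxx !andbF /= subrr mul0r sub0r !subr0.
by case: (p == n :> nat); case: (q == n.-1 :> nat); rewrite ?mul1r ?mul0r ?oppr0.
Qed.

End MiddleBlock.

Section CentralizerIsDiagonal.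
Variables (F : fieldType) (n : nat) (c : 'M[F]_n) (X : 'M[F]_(2 * n)).
Hypotheses (hchar : [pchar F] =i pred0) (hn : (3 <= n)%N).
Hypotheses (hO : in_O X) (hr : AdAd X (r_BD c) = r_BD c).
Local Notation N := (2 * n)%N.
Local Notation E := (E F n).
Local Notation mid := (mid n).

Fact b1_lt : (n.-1 < N)%N. Proof. lia. Qed.
Fact b2_lt : (n < N)%N. Proof. lia. Qed.
Definition b1 : 'I_N := Ordinal b1_lt.
Definition b2 : 'I_N := Ordinal b2_lt.

Lemma midE (k : 'I_N) : mid k = (k == b1) || (k == b2).
Proof. by rewrite /mid -!val_eqE. Qed.

Lemma mid_b1 : mid b1. Proof. by rewrite midE eqxx. Qed.
Lemma mid_b2 : mid b2. Proof. by rewrite midE eqxx orbT. Qed.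

Lemma rev_b1 : rev_ord b1 = b2.
Proof. by apply: val_inj => /=; lia. Qed.

Lemma b1_neq_b2 : (b1 == b2) = false.
Proof. by rewrite -val_eqE /=; apply/eqP; lia. Qed.

Lemma sum_mid (f : 'I_N -> F) : (forall k : 'I_N, ~~ mid k -> f k = 0) ->
  \sum_(k < N) f k = f b1 + f b2.
Proof.
move=> hf; rewrite (bigD1 b1) //= (bigD1 b2) /=; last by rewrite eq_sym b1_neq_b2.
by rewrite big1 ?addr0 // => k /andP[h1 h2]; apply: hf; rewrite midE negb_or h1.
Qed.

Let hu : X \in unitmx := O_unit hO.

(* X commutes with 2 rho^vee, hence vanishes outside the diagonal and the
   middle block *)
Lemma offmid_zero (p q : 'I_N) : p != q -> ~~ (mid p && mid q) -> X p q = 0.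
Proof.
move=> hpq hb; have hD := mcomm_commute hu hr; rewrite mcomm_rBD // in hD.
by apply: commute_diag_entry hD _; rewrite !mxE two_rho_inj.
Qed.

Lemma mid_col0 (p k : 'I_N) : mid p -> ~~ mid k -> X k p = 0.
Proof. by move=> hp hk; apply: offmid_zero; [apply: contraNneq hk => -> | rewrite (negbTE hk)]. Qed.

Lemma mid_row0 (p k : 'I_N) : mid p -> ~~ mid k -> X p k = 0.
Proof.
by move=> hp hk; apply: offmid_zero; [apply: contraNneq hk => <- | rewrite (negbTE hk) andbF].
Qed.

(* X commutes with E_{n-2,n-2}, since n-2 is outside the middle block *)
Lemma E_k0_commute : E n.-2 n.-2 *m X = X *m E n.-2 n.-2.
Proof.
rewrite E_diag; apply: diag_commute => p q hX; rewrite !mxE.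
have [-> //|hpq] := eqVneq p q.
case: (boolP (mid p && mid q)) => [/andP[hp hq]|hb]; last by rewrite offmid_zero ?eqxx in hX.
have nk (k : 'I_N) : mid k -> ((k : nat) == n.-2) = false.
  by rewrite /mid => /orP[] /eqP->; apply/eqP; lia.
by rewrite !nk.
Qed.

(* X commutes with G = Phi_{E_{n-2,n-2}} r, whose middle block is -E_{n,n-1};
   comparing the middle blocks of G X and X G gives: *)
Lemma mid_block : X b1 b2 = 0 /\ X b1 b1 = X b2 b2.
Proof.
have hG := Phi_commute hu hr E_k0_commute.
set G := Phi (E n.-2 n.-2) (r_BD c) in hG.
have ne : (n.-1 == n) = false by apply/eqP; lia.
have G11 : G b1 b1 = 0 by rewrite /G Phi_mid ?mid_b1 //= ne oppr0.
have G12 : G b1 b2 = 0 by rewrite /G Phi_mid ?mid_b1 ?mid_b2 //= ne oppr0.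
have G21 : G b2 b1 = -1 by rewrite /G Phi_mid ?mid_b1 ?mid_b2 //= !eqxx.
have G22 : G b2 b2 = 0 by rewrite /G Phi_mid ?mid_b2 //= eqxx eq_sym ne oppr0.
have entry (p q : 'I_N) : mid p -> mid q ->
    G p b1 * X b1 q + G p b2 * X b2 q = X p b1 * G b1 q + X p b2 * G b2 q.
  move=> hp hq; have := congr1 (fun M : 'M[F]_N => M p q) hG.
  rewrite /= [(G *m X) p q]mxE [(X *m G) p q]mxE.
  by rewrite !sum_mid // => k hk; rewrite ?(mid_row0 hp hk) ?(mid_col0 hq hk) ?mulr0 ?mul0r.
have := entry b1 b1 mid_b1 mid_b1.
rewrite G11 G12 G21 !mul0r mulr0 !add0r mulrN1 => /esym/eqP.
rewrite oppr_eq0 => /eqP ->; split => //.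
have := entry b2 b1 mid_b2 mid_b1.
by rewrite G11 G21 G22 !mul0r mulr0 addr0 add0r mulN1r mulrN1 => /oppr_inj.
Qed.

(* X^T S X = S restricted to a pair of mirror indices outside the middle block *)
Lemma mirror_diag (p : 'I_N) : ~~ mid p -> X p p * X (rev_ord p) (rev_ord p) = 1.
Proof.
move=> hp; have := O_entry p (rev_ord p) hO; rewrite Smx_rev eqxx mulr1n => <-.
rewrite (bigD1 (rev_ord p)) //= rev_ordK big1 ?addr0 // => j hj.
rewrite offmid_zero ?mul0r ?(negbTE hp) ?andbF //.
by apply: contraNneq hj => <-; rewrite rev_ordK.
Qed.

(* ... and restricted to the middle block, using mid_block *)
Lemma mid_orth : X b2 b1 = 0 /\ X b1 b1 * X b1 b1 = 1.
Proof.
have [h12 h11] := mid_block.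
have rev_b2 : rev_ord b2 = b1 by rewrite -rev_b1 rev_ordK.
have e11 := O_entry b1 b1 hO; have e12 := O_entry b1 b2 hO.
rewrite sum_mid in e11; last by move=> k hk; rewrite (mid_col0 mid_b1 hk) mulr0.
rewrite sum_mid in e12; last by move=> k hk; rewrite (mid_col0 mid_b2 hk) mulr0.
rewrite Smx_rev rev_b1 rev_b2 b1_neq_b2 mulr0n in e11.
rewrite Smx_rev rev_b1 rev_b2 eqxx mulr1n h12 -h11 mulr0 add0r in e12.
split => //; have h2 : (2%:R : F) != 0 by rewrite ((pcharf0P F).1 hchar).
have : X b2 b1 * (2%:R * X b1 b1) = 0 by rewrite -e11; ring.
have hX : X b1 b1 != 0 by apply: contra_eq_neq e12 => ->; rewrite mul0r eq_sym oner_neq0.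
by move/eqP; rewrite !mulf_eq0 (negbTE h2) (negbTE hX) /= orbF => /eqP.
Qed.

(* Conclusion: X is the diagonal matrix Tdiag with t_k = X_kk and eta = X_{n-1,n-1}. *)
Lemma centralizer_is_Tdiag : exists (t : nat -> F) (eta : F),
  (forall k, (k < n.-1)%N -> t k != 0) /\ (eta = 1 \/ eta = -1) /\ X = Tdiag n t eta.
Proof.
have [h12 h11] := mid_block; have [h21 heta] := mid_orth.
have nmid (k : 'I_N) : (k < n.-1)%N || (n < k)%N -> ~~ mid k.
  by rewrite /mid => /orP hk; apply/norP; split; apply/eqP; lia.
pose t k := X (insubd b1 k) (insubd b1 k).
have tE (k : 'I_N) : t k = X k k by rewrite /t valKd.
exists t, (X b1 b1); split; [|split].
- move=> k hk; have hkN : (k < N)%N by lia.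
  have hm : ~~ mid (Ordinal hkN) by apply: nmid; rewrite /= hk.
  rewrite (tE (Ordinal hkN)); apply/eqP => h0; have := mirror_diag hm.
  by rewrite h0 mul0r => /esym/eqP; rewrite oner_eq0.
- have : (X b1 b1 - 1) * (X b1 b1 + 1) = 0 by rewrite mulrDr mulrBl heta; ring.
  by move/eqP; rewrite mulf_eq0 subr_eq0 addr_eq0 => /orP[] /eqP; [left | right].
apply/matrixP => p q; rewrite /Tdiag !mxE.
have [<-|hpq] := eqVneq p q; last first.
  rewrite mulr0n; case: (boolP (mid p && mid q)) => [|hb]; last exact: offmid_zero.
  rewrite !midE => /andP[] /orP[] /eqP hp /orP[] /eqP hq; subst p q;
    by [rewrite eqxx in hpq | exact: h12 | exact: h21].
rewrite mulr1n; case: ifP => [_|hp1]; first by rewrite tE.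
case: ifP => hp2.
  have [->|hb1] := eqVneq p b1; first by [].
  suff -> : p = b2 by [].
  by apply: val_inj; move: hb1 hp1 hp2; rewrite -val_eqE /= => /eqP ? /negbT; lia.
have hp : ~~ mid p by apply: nmid; apply/orP; right; move/negbT: hp2; lia.
have e := mirror_diag hp.
have hrr : X (rev_ord p) (rev_ord p) != 0.
  by apply/eqP => h0; move: e; rewrite h0 mulr0 => /esym/eqP; rewrite oner_eq0.
rewrite (_ : (N.-1 - p)%N = rev_ord p); last by rewrite /=; lia.
by rewrite tE -[LHS]mulr1 -(mulfV hrr) mulrA e mul1r.
Qed.

End CentralizerIsDiagonal.

Section DiagonalAction.
Variables (F : fieldType) (n : nat).
Local Notation N := (2 * n)%N.
Local Notation tensor := (tensor F n).
Variable x : nat -> F.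
Hypothesis x_neq0 : forall k, x k != 0.
Local Notation d := (\row_(k < N) x k).

Lemma invmx_diag : invmx (diag_mx d) = diag_mx (\row_(k < N) (x k)^-1).
Proof.
have h : diag_mx d *m diag_mx (\row_(k < N) (x k)^-1) = 1%:M.
  rewrite mulmx_diag -diag_const_mx; congr diag_mx; apply/rowP => k.
  by rewrite !mxE mulfV.
have [hu _] := mulmx1_unit h.
by rewrite -[RHS]mul1mx -(mulVmx hu) -mulmxA h mulmx1.
Qed.

Lemma sum_single (g : 'I_N -> F) p : (forall k, k != p -> g k = 0) -> \sum_k g k = g p.
Proof. by move=> hg; rewrite (bigD1 p) //= big1 ?addr0. Qed.

Lemma diag_entry (e : 'rV[F]_N) (p q : 'I_N) : diag_mx e p q = (p == q)%:R * e 0 p.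
Proof. by rewrite mxE mulr_natl. Qed.

Lemma AdAd_diag (T : tensor) (p q u v : 'I_N) :
  AdAd (diag_mx d) T (p, q, u, v) = x p / x q * (x u / x v) * T (p, q, u, v).
Proof.
rewrite ffunE /= invmx_diag.
have off (a b : 'I_N) (e : 'rV[F]_N) : (a == b) = false -> diag_mx e a b = 0.
  by move=> hab; rewrite diag_entry hab mul0r.
rewrite (sum_single (p := p)) => [|a ha]; last first.
  rewrite big1 // => b _; rewrite big1 // => c _; rewrite big1 // => w _.
  by rewrite (off p a) ?mul0r // eq_sym (negbTE ha).
rewrite (sum_single (p := q)) => [|b hb]; last first.
  rewrite big1 // => c _; rewrite big1 // => w _.
  by rewrite (off b q) ?mulr0 ?mul0r // (negbTE hb).
rewrite (sum_single (p := u)) => [|c hc]; last first.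
  by rewrite big1 // => w _; rewrite (off u c) ?mulr0 ?mul0r // eq_sym (negbTE hc).
rewrite (sum_single (p := v)) => [|w hw]; last first.
  by rewrite (off w v) ?mulr0 ?mul0r // (negbTE hw).
rewrite !diag_entry !mxE !eqxx !mul1r; ring.
Qed.

(* A has weight l for D = diag(x), i.e. D A D^{-1} = l A *)
Definition weight (l : F) (A : 'M[F]_N) : Prop :=
  forall a b : 'I_N, x a / x b * A a b = l * A a b.

Definition balanced (T : tensor) : Prop :=
  forall p q u v : 'I_N, x p / x q * (x u / x v) * T (p, q, u, v) = T (p, q, u, v).

Lemma AdAd_balanced (T : tensor) : balanced T -> AdAd (diag_mx d) T = T.
Proof.
by move=> hT; apply/ffunP => [[[[p q] u] v]]; rewrite AdAd_diag hT.
Qed.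

Lemma balanced_tens l m (A B : 'M[F]_N) :
  weight l A -> weight m B -> l * m = 1 -> balanced (tens A B).
Proof.
move=> hA hB hlm p q u v; rewrite ffunE /=.
transitivity ((x p / x q * A p q) * (x u / x v * B u v)); first by ring.
by rewrite hA hB -[RHS]mul1r -hlm; ring.
Qed.

Lemma balancedD T1 T2 : balanced T1 -> balanced T2 -> balanced (T1 + T2).
Proof. by move=> h1 h2 p q u v; rewrite !ffunE mulrDr h1 h2. Qed.

Lemma balancedN T : balanced T -> balanced (- T).
Proof. by move=> h p q u v; rewrite !ffunE mulrN h. Qed.

Lemma balanced_sum I (r : seq I) (P : pred I) (G : I -> tensor) :
  (forall i, P i -> balanced (G i)) -> balanced (\sum_(i <- r | P i) G i).
Proof.
move=> h; apply: big_ind => //; last exact: balancedD.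
by move=> p q u v; rewrite !ffunE mulr0.
Qed.

Lemma weightE a b : weight (x a / x b) (E F n a b).
Proof.
move=> p q; rewrite mxE.
by case: (eqVneq (p : nat) a) => [<-|_]; case: (eqVneq (q : nat) b) => [<-|_]; rewrite ?mulr0.
Qed.

Lemma weightB l (A B : 'M[F]_N) : weight l A -> weight l B -> weight l (A - B).
Proof. by move=> hA hB p q; rewrite !mxE !mulrBr hA hB. Qed.

Lemma weightZ l a (A : 'M[F]_N) : weight l A -> weight l (a *: A).
Proof. by move=> hA p q; rewrite !mxE mulrCA hA mulrCA. Qed.

Lemma weight_eq l l' (A : 'M[F]_N) : l = l' -> weight l A -> weight l' A.
Proof. by move=> ->. Qed.

Lemma weight_tr l (A : 'M[F]_N) : l != 0 -> weight l A -> weight l^-1 A^T.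
Proof.
move=> hl hA p q; rewrite !mxE; apply: (mulfI hl).
rewrite [RHS]mulrA mulfV // mul1r mulrCA -hA mulrA.
have hp := x_neq0 p; have hq := x_neq0 q.
by rewrite [X in X * _](_ : _ = 1) ?mul1r // mulrA divfK // divff.
Qed.

End DiagonalAction.

Section TdiagInCentralizer.
Variables (F : fieldType) (n : nat) (t : nat -> F) (eta : F).
Hypotheses (ht : forall k, (k < n.-1)%N -> t k != 0) (heta : eta = 1 \/ eta = -1).
Hypothesis hn : (3 <= n)%N.
Local Notation N := (2 * n)%N.
Local Notation mir := (mir n).

Definition tentry (k : nat) : F :=
  if (k < n.-1)%N then t k else if (k <= n)%N then eta else (t (N.-1 - k))^-1.

Lemma Tdiag_tentry : Tdiag n t eta = diag_mx (\row_(k < N) tentry k).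
Proof. by []. Qed.

Lemma eta_sqr : eta * eta = 1.
Proof. by case: heta => ->; rewrite ?mulr1 ?mulrNN ?mulr1. Qed.

Lemma tentry_neq0 k : tentry k != 0.
Proof.
rewrite /tentry; case: ifP => h1; first exact: ht.
case: ifP => h2; last by rewrite invr_eq0; apply: ht; lia.
by apply: contra_eq_neq eta_sqr => ->; rewrite mul0r eq_sym oner_neq0.
Qed.

Lemma tentry_mir k : (k < N)%N -> tentry (mir k) = (tentry k)^-1.
Proof.
move=> hk; rewrite /tentry /mir.
case: (ltnP k n.-1) => h1.
  rewrite ifF; last by apply/negbTE; rewrite -leqNgt; lia.
  rewrite ifF; last by apply/negbTE; rewrite -ltnNge; lia.
  by congr (_^-1); congr t; lia.
case: (leqP k n) => h2.
  rewrite ifF; last by apply/negbTE; rewrite -leqNgt; lia.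
  by rewrite ifT; [case: heta => ->; rewrite ?invr1 ?invrN ?invr1 | lia].
by rewrite ifT ?invrK //; lia.
Qed.

Local Notation weight := (weight tentry).
Local Notation balanced := (balanced tentry).

Lemma weightH i : (i < n)%N -> weight 1 (H F n i).
Proof.
move=> hi; apply: weightB; apply: weight_eq (weightE _ _ _) => //; exact: divff (tentry_neq0 _).
Qed.

Lemma weight_eminus i j : (i < n)%N -> (j < n)%N ->
  weight (tentry i / tentry j) (eminus F n i j).
Proof.
move=> hi hj; have mi : tentry (mir i) = (tentry i)^-1 by apply: tentry_mir; lia.
have mj : tentry (mir j) = (tentry j)^-1 by apply: tentry_mir; lia.
apply: weightB; first exact: weightE.
by apply: weight_eq (weightE _ _ _); rewrite mi mj invrK mulrC.
Qed.

Lemma weight_eplus i j : (i < n)%N -> (j < n)%N ->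
  weight (tentry i * tentry j) (eplus F n i j).
Proof.
move=> hi hj; have mi : tentry (mir i) = (tentry i)^-1 by apply: tentry_mir; lia.
have mj : tentry (mir j) = (tentry j)^-1 by apply: tentry_mir; lia.
apply: weightB; apply: weight_eq (weightE _ _ _); first by rewrite mj invrK.
by rewrite mi invrK mulrC.
Qed.

(* every summand of r_BD pairs two vectors of opposite weight *)
Lemma balanced_rBD (c : 'M[F]_n) : balanced (r_BD c).
Proof.
have nz i : tentry i != 0 := tentry_neq0 i.
apply: balancedD; first apply: balancedD.
- apply: balanced_sum => i _; apply: balanced_sum => j _.
  apply: (@balanced_tens _ _ _ 1 1); rewrite ?mulr1 //; last exact: weightH.
  exact/weightZ/weightH.
- apply: balanced_sum => i _; apply: balanced_sum => j _; apply: balancedD.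
  + have hl : tentry i / tentry j != 0 by rewrite mulf_neq0 ?invr_eq0.
    have hw := weight_eminus (ltn_ord i) (ltn_ord j).
    exact: balanced_tens hw (weight_tr tentry_neq0 hl hw) (mulfV hl).
  + have hl : tentry i * tentry j != 0 by rewrite mulf_neq0.
    have hw := weight_eplus (ltn_ord i) (ltn_ord j).
    exact: balanced_tens hw (weight_tr tentry_neq0 hl hw) (mulfV hl).
have h2 : (n.-2 < n)%N by lia.
have h1 : (n.-1 < n)%N by lia.
have xe : tentry n.-1 = eta by rewrite /tentry ltnn ifT //; lia.
have hlm : tentry n.-2 / tentry n.-1 * (tentry n.-2 * tentry n.-1)^-1 = 1.
  by rewrite invfM mulrACA (mulfV (nz _)) mul1r -invfM xe eta_sqr invr1.
apply: balancedD; last apply: balancedN.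
  apply: balanced_tens (weight_eminus h2 h1) (weight_tr tentry_neq0 _ (weight_eplus h2 h1)) hlm.
  by rewrite mulf_neq0.
apply: balanced_tens (weight_tr tentry_neq0 _ (weight_eplus h2 h1)) (weight_eminus h2 h1) _.
  by rewrite mulf_neq0.
by rewrite mulrC.
Qed.

(* Tdiag is orthogonal, since its mirror entries are mutually inverse *)
Lemma Tdiag_O : in_O (Tdiag n t eta).
Proof.
apply/matrixP => p q; rewrite Tdiag_tentry tr_diag_mx mul_mx_diag mxE mulmxS.
rewrite Smx_rev diag_entry !mxE eq_sym (can2_eq rev_ordK rev_ordK).
have [->|_] := eqVneq q (rev_ord p); last by rewrite !mul0r.
have -> : (rev_ord p : nat) = mir p by rewrite /= /mir; lia.
by rewrite mul1r tentry_mir // mulfV // tentry_neq0.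
Qed.

End TdiagInCentralizer.

Theorem mainTheorem11 (F : closedFieldType) (hchar : [pchar F] =i pred0)
  (n : nat) (hn : (3 <= n)%N) (c : 'M[F]_n) (hc : admissible_r0 c)
  (X : 'M[F]_(2 * n)) :
  in_C (r_BD c) X <->
  exists (t : nat -> F) (eta : F),
    (forall k, (k < n.-1)%N -> t k != 0) /\ (eta = 1 \/ eta = -1) /\
    X = Tdiag n t eta.
Proof.
split => [[hO hr] | [t [eta [ht [heta ->]]]]].
  exact: centralizer_is_Tdiag hchar hn hO hr.
split; first exact: Tdiag_O ht heta hn.
have hfix := AdAd_balanced (tentry_neq0 ht heta hn) (balanced_rBD ht heta hn c).
by rewrite Tdiag_tentry hfix.
Qed.
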